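(* Let $s\ge0$. Then for every $t\in\mathbb{R}$ the trilinear operator $B_3$ defined in the context maps $(\dot H^s)^3$ into $\dot H^{s+2}$ and satisfies $$\|B_3(u,v,w)\|_{\dot H^{s+2}}\le c_3(s)\|u\|_{\dot H^s}\|v\|_{\dot H^s}\|w\|_{\dot H^s},$$ with a constant $c_3(s)$ depending only on $s$.
   Context: Write $\mathbb{Z}_0=\mathbb{Z}\setminus\{0\}$. For $s\in\mathbb{R}$, $\dot H^s$ denotes the Hilbert space of complex sequences $v=(v_k)_{k\in\mathbb{Z}_0}$ with $\|v\|_{\dot H^s}^2=\sum_{k\in\mathbb{Z}_0}|k|^{2s}|v_k|^2<\infty$. For $t\in\mathbb{R}$, $$B_3(u,v,w)_k=\sum^{\mathrm{nonres}}_{k_1+k_2+k_3=k}\frac{e^{3i(k_1+k_2)(k_2+k_3)(k_3+k_1)t}}{k_1(k_1+k_2)(k_2+k_3)(k_3+k_1)}u_{k_1}v_{k_2}w_{k_3},\qquad k\in\mathbb{Z}_0,$$ where the sum runs over $k_1,k_2,k_3\in\mathbb{Z}_0$ with $k_1+k_2+k_3=k$ and $(k_1+k_2)(k_2+k_3)(k_3+k_1)\ne0$. *)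

From Stdlib Require Import Reals ZArith Lra.
From Coquelicot Require Import Coquelicot.
Open Scope R_scope.

(* Sequences indexed by Z_0 = Z \ {0} are represented as functions Z -> C;
   the value at 0 is ignored everywhere (all sums below skip index 0). *)
Definition seqZ := Z -> C.

Definition zpair (f : Z -> R) (n : nat) : R :=
  match n with
  | O => f 0%Z
  | S m => f (Z.of_nat m + 1)%Z + f (- (Z.of_nat m + 1))%Z
  end.

Definition zsummable (f : Z -> C) : Prop :=
  ex_series (zpair (fun k => Cmod (f k))).

(* Sum over Z of a real family, and of a complex family (componentwise).
   For absolutely summable families this is the unconditional sum. *)
Definition ZsumR (f : Z -> R) : R := Series (zpair f).
Definition Zsum (f : Z -> C) : C :=
  (ZsumR (fun k => Re (f k)), ZsumR (fun k => Im (f k))).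

(* Absolute summability of a complex family over Z x Z (iterated form,
   equivalent to absolute summability on Z^2 by Tonelli). *)
Definition zsummable2 (F : Z -> Z -> C) : Prop :=
  (forall k1, zsummable (F k1)) /\
  ex_series (zpair (fun k1 => ZsumR (fun k2 => Cmod (F k1 k2)))).

Definition Hdot_term (s : R) (v : seqZ) (k : Z) : R :=
  if Z.eqb k 0 then 0
  else Rpower (IZR (Z.abs k)) (2 * s) * (Cmod (v k)) ^ 2.

Definition in_Hdot (s : R) (v : seqZ) : Prop :=
  ex_series (zpair (Hdot_term s v)).

Definition Hdot_norm (s : R) (v : seqZ) : R :=
  sqrt (ZsumR (Hdot_term s v)).

Definition cexpi (theta : R) : C := (cos theta, sin theta).

Definition B3_term (t : R) (u v w : seqZ) (k k1 k2 : Z) : C :=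
  let k3 := (k - k1 - k2)%Z in
  let p := ((k1 + k2) * (k2 + k3) * (k3 + k1))%Z in
  if (Z.eqb k1 0 || Z.eqb k2 0 || Z.eqb k3 0 || Z.eqb p 0)%bool then RtoC 0
  else Cmult
         (Cdiv (cexpi (3 * IZR p * t)) (RtoC (IZR (k1 * p))))
         (Cmult (u k1) (Cmult (v k2) (w k3))).

Definition B3 (t : R) (u v w : seqZ) : seqZ :=
  fun k => Zsum (fun k1 => Zsum (fun k2 => B3_term t u v w k k1 k2)).

(* Write U_j = |j|^s |u_j| (similarly V, W) and k3 = k - k1 - k2. Since |k| <= |k1| + |k2| + |k3|,
   |k|^(s+2) |B3(u,v,w)_k| <= 3^s sum_(k1,k2) M(k,k1,k2) U_k1 V_k2 W_k3 with
   M = k^2 / |k1 (k1+k2)(k2+k3)(k3+k1)|. Using 2 k1 = (k1+k2) - (k-k1) + (k-k2) and k = k1 + (k-k1),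
   M^2 is dominated by sums of products of two weights ~ 1/n^2 evaluated at independent linear
   forms in (k1, k2), so sum_(k1,k2) M^2 is bounded uniformly in k. Cauchy-Schwarz in (k1, k2)
   then bounds |k|^(2s+4) |B3_k|^2 by a constant times the triple convolution (U^2 * V^2 * W^2)_k,
   whose sum over k is ||u||^2 ||v||^2 ||w||^2. *)

From Stdlib Require Import Reals ZArith Lra Lia List FinFun.
From Coquelicot Require Import Coquelicot.
Open Scope R_scope.

(** * Nonnegative sums over Z *)

Definition ex_ZsumR (f : Z -> R) : Prop := ex_series (zpair f).

Definition lsum (f : Z -> R) (l : list Z) : R := fold_right (fun x acc => f x + acc) 0 l.

(* Listed in the order in which [zpair] visits them, so that [sum_n (zpair f) N] is a list sum. *)
Fixpoint Zball (N : nat) : list Z :=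
  match N with
  | O => 0%Z :: nil
  | S m => Zball m ++ ((Z.of_nat m + 1)%Z :: (- (Z.of_nat m + 1))%Z :: nil)
  end.

Lemma lsum_app f l1 l2 : lsum f (l1 ++ l2) = lsum f l1 + lsum f l2.
Proof. induction l1 as [|a l1 IH]; simpl; [lra|]. rewrite IH; lra. Qed.

Lemma lsum_le f g l : (forall x, f x <= g x) -> lsum f l <= lsum g l.
Proof. intros H; induction l as [|a l IH]; simpl; [lra|]. specialize (H a); lra. Qed.

Lemma lsum_nonneg f l : (forall x, 0 <= f x) -> 0 <= lsum f l.
Proof. intros H; induction l as [|a l IH]; simpl; [lra|]. specialize (H a); lra. Qed.

Lemma lsum_map f (phi : Z -> Z) l : lsum (fun k => f (phi k)) l = lsum f (map phi l).
Proof. induction l as [|a l IH]; simpl; auto. rewrite IH; auto. Qed.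

Lemma lsum_incl f l l' :
  (forall x, 0 <= f x) -> NoDup l -> incl l l' -> lsum f l <= lsum f l'.
Proof.
  intros Hf Hl. revert l'. induction Hl as [|a l Ha Hl IH]; intros l' Hi.
  - apply lsum_nonneg; auto.
  - destruct (in_split a l' (Hi a (or_introl eq_refl))) as [l1 [l2 ->]].
    assert (Hrest : lsum f l <= lsum f (l1 ++ l2)).
    { apply IH. intros y Hy. specialize (Hi y (or_intror Hy)).
      rewrite in_app_iff in *. destruct Hi as [H|[H|H]]; auto. subst; contradiction. }
    rewrite lsum_app in *. simpl. generalize (Hf a); lra.
Qed.

Lemma sum_Sn_R (a : nat -> R) n : sum_n a (S n) = sum_n a n + a (S n).
Proof. rewrite sum_Sn. reflexivity. Qed.

Lemma sum_n_zpair f N : sum_n (zpair f) N = lsum f (Zball N).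
Proof.
  induction N as [|N IH].
  - rewrite sum_O. simpl. lra.
  - rewrite sum_Sn_R, IH. simpl Zball. rewrite lsum_app. simpl. lra.
Qed.

Lemma In_Zball x N : In x (Zball N) <-> (Z.abs x <= Z.of_nat N)%Z.
Proof.
  induction N as [|N IH]; simpl.
  - split; [intros [H|[]]; subst; simpl; lia | intros; left; lia].
  - rewrite in_app_iff, IH. simpl. split; [intros [H|[H|[H|[]]]]; lia|].
    intros H. destruct (Z_le_gt_dec (Z.abs x) (Z.of_nat N)); [now left|right].
    destruct (Z_le_gt_dec 0 x); [left|right; left]; lia.
Qed.

Lemma NoDup_Zball N : NoDup (Zball N).
Proof.
  induction N as [|N IH]; simpl; [repeat constructor; simpl; auto|].
  apply NoDup_app; auto.
  - repeat constructor; simpl; lia.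
  - intros x Hx Hy. apply In_Zball in Hx. simpl in Hy. lia.
Qed.

Lemma incl_Zball l : exists N, incl l (Zball N).
Proof.
  induction l as [|a l [N HN]]; [exists O; intros x []|].
  exists (Nat.max N (Z.to_nat (Z.abs a))). intros x [->|Hx]; apply In_Zball.
  - lia.
  - apply HN, In_Zball in Hx. lia.
Qed.

Lemma zpair_nonneg f n : (forall x, 0 <= f x) -> 0 <= zpair f n.
Proof.
  intros H. destruct n; simpl; [apply H|].
  generalize (H (Z.of_nat n + 1)%Z) (H (- (Z.of_nat n + 1))%Z). lra.
Qed.

Lemma zpair_ext f g n : (forall x, f x = g x) -> zpair f n = zpair g n.
Proof. intros H; destruct n; simpl; rewrite ?H; auto. Qed.

(* For nonnegative families [ZsumR] is the supremum of the sums over duplicate-free lists; every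
   manipulation of such sums below goes through this characterisation. *)
Lemma lsum_le_ZsumR f l :
  (forall x, 0 <= f x) -> ex_ZsumR f -> NoDup l -> lsum f l <= ZsumR f.
Proof.
  intros Hf He Hl. destruct (incl_Zball l) as [N HN].
  apply Rle_trans with (lsum f (Zball N)); [apply lsum_incl; auto|].
  rewrite <- sum_n_zpair. apply (is_lim_seq_incr_compare (sum_n (zpair f))).
  - apply Series_correct, He.
  - intros n. rewrite sum_Sn_R. generalize (zpair_nonneg f (S n) Hf). simpl; lra.
Qed.

Lemma ZsumR_le_of_lsum f M :
  (forall x, 0 <= f x) -> (forall l, NoDup l -> lsum f l <= M) ->
  ex_ZsumR f /\ ZsumR f <= M.
Proof.
  intros Hf HM.
  assert (Hpart : forall N, sum_n (zpair f) N <= M).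
  { intros N. rewrite sum_n_zpair. apply HM, NoDup_Zball. }
  assert (Hgrow : Un_growing (sum_n (zpair f))).
  { intros n. rewrite sum_Sn_R. generalize (zpair_nonneg f (S n) Hf). simpl; lra. }
  destruct (growing_cv _ Hgrow) as [l Hl]; [exists M; intros x [i ->]; apply Hpart|].
  apply is_lim_seq_Reals in Hl.
  split; [exists l; exact Hl|].
  unfold ZsumR. rewrite (is_series_unique _ _ Hl).
  exact (is_lim_seq_le _ (fun _ => M) l M Hpart Hl (is_lim_seq_const M)).
Qed.

Lemma ZsumR_nonneg f : (forall x, 0 <= f x) -> ex_ZsumR f -> 0 <= ZsumR f.
Proof. intros. apply (lsum_le_ZsumR f nil); auto. constructor. Qed.

Lemma le_ZsumR f x : (forall x, 0 <= f x) -> ex_ZsumR f -> f x <= ZsumR f.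
Proof.
  intros. apply Rle_trans with (lsum f (x :: nil)); [simpl; lra|].
  apply lsum_le_ZsumR; auto. repeat constructor. simpl; auto.
Qed.

Lemma ZsumR_ext f g : (forall x, f x = g x) -> ZsumR f = ZsumR g.
Proof. intros H. apply Series_ext. intros; apply zpair_ext; auto. Qed.

Lemma ex_ZsumR_ext f g : (forall x, f x = g x) -> ex_ZsumR f -> ex_ZsumR g.
Proof. intros H. apply ex_series_ext. intros; apply zpair_ext; auto. Qed.

Lemma ZsumR_plus f g : ex_ZsumR f -> ex_ZsumR g ->
  ex_ZsumR (fun k => f k + g k) /\ ZsumR (fun k => f k + g k) = ZsumR f + ZsumR g.
Proof.
  intros Hf Hg.
  assert (E : forall n, zpair (fun k => f k + g k) n = zpair f n + zpair g n)
    by (intros [|n]; simpl; ring).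
  split.
  - eapply ex_series_ext; [intros n; symmetry; apply E|]. apply (ex_series_plus _ _ Hf Hg).
  - unfold ZsumR. rewrite (Series_ext _ _ E). apply Series_plus; auto.
Qed.

Lemma ZsumR_scal c f : ex_ZsumR f ->
  ex_ZsumR (fun k => c * f k) /\ ZsumR (fun k => c * f k) = c * ZsumR f.
Proof.
  intros Hf.
  assert (E : forall n, zpair (fun k => c * f k) n = c * zpair f n)
    by (intros [|n]; simpl; ring).
  split.
  - eapply ex_series_ext; [intros n; symmetry; apply E|]. apply (ex_series_scal_l c _ Hf).
  - unfold ZsumR. rewrite (Series_ext _ _ E). apply Series_scal_l.
Qed.

Lemma ZsumR_dominated f g :
  (forall x, 0 <= f x <= g x) -> ex_ZsumR g -> ex_ZsumR f /\ ZsumR f <= ZsumR g.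
Proof.
  intros H Hg. apply ZsumR_le_of_lsum; [intros x; apply H|].
  intros l Hl. apply Rle_trans with (lsum g l); [apply lsum_le; intros; apply H|].
  apply lsum_le_ZsumR; auto. intros x; generalize (H x); lra.
Qed.

Lemma ZsumR_le f g : (forall x, f x <= g x) -> ex_ZsumR f -> ex_ZsumR g -> ZsumR f <= ZsumR g.
Proof.
  intros H Hf Hg.
  destruct (ZsumR_scal (-1) f Hf) as [H1 H2].
  destruct (ZsumR_plus _ _ Hg H1) as [H3 H4].
  assert (0 <= ZsumR (fun k => g k + -1 * f k)).
  { apply ZsumR_nonneg; auto. intros x; specialize (H x); lra. }
  lra.
Qed.

Lemma ex_ZsumR_abs_le f g : (forall x, Rabs (f x) <= g x) -> ex_ZsumR g -> ex_ZsumR f.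
Proof.
  intros H Hg. apply (@ex_series_le R_AbsRing R_CompleteNormedModule _ (zpair g)); [|exact Hg].
  intros [|n]; change norm with Rabs; simpl; [apply H|].
  eapply Rle_trans; [apply Rabs_triang | apply Rplus_le_compat; apply H].
Qed.

Lemma ZsumR_reindex_le f (phi : Z -> Z) :
  Injective phi -> (forall x, 0 <= f x) -> ex_ZsumR f ->
  ex_ZsumR (fun k => f (phi k)) /\ ZsumR (fun k => f (phi k)) <= ZsumR f.
Proof.
  intros Hi Hf Hz. apply ZsumR_le_of_lsum; [intros; apply Hf|].
  intros l Hl. rewrite lsum_map. apply lsum_le_ZsumR; auto. apply Injective_map_NoDup; auto.
Qed.

Lemma ZsumR_lsum (F : Z -> Z -> R) l : (forall i, ex_ZsumR (F i)) ->
  ex_ZsumR (fun k => lsum (fun i => F i k) l) /\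
  ZsumR (fun k => lsum (fun i => F i k) l) = lsum (fun i => ZsumR (F i)) l.
Proof.
  intros HF. induction l as [|a l [IH1 IH2]]; simpl.
  - destruct (ZsumR_scal 0 _ (HF 0%Z)) as [H1 H2].
    split; [eapply ex_ZsumR_ext; [|exact H1]; intros; simpl; ring|].
    rewrite (ZsumR_ext _ (fun k => 0 * F 0%Z k)), H2; [ring | intros; ring].
  - destruct (ZsumR_plus _ _ (HF a) IH1) as [H1 H2]. rewrite H2, IH2. auto.
Qed.
(** * Iterated double sums *)

Definition ex_ZsumR2 (F : Z -> Z -> R) : Prop :=
  (forall a, ex_ZsumR (F a)) /\ ex_ZsumR (fun a => ZsumR (F a)).

Definition ZsumR2 (F : Z -> Z -> R) : R := ZsumR (fun a => ZsumR (F a)).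

Lemma ZsumR2_nonneg F : (forall a b, 0 <= F a b) -> ex_ZsumR2 F -> 0 <= ZsumR2 F.
Proof.
  intros H [H1 H2]. apply ZsumR_nonneg; auto. intros a. apply ZsumR_nonneg; auto.
Qed.

Lemma ZsumR2_dominated F G :
  (forall a b, 0 <= F a b <= G a b) -> ex_ZsumR2 G -> ex_ZsumR2 F /\ ZsumR2 F <= ZsumR2 G.
Proof.
  intros H [HG1 HG2].
  assert (Hrow : forall a, ex_ZsumR (F a) /\ ZsumR (F a) <= ZsumR (G a))
    by (intros a; apply ZsumR_dominated; auto).
  assert (Hout : ex_ZsumR (fun a => ZsumR (F a)) /\ ZsumR2 F <= ZsumR2 G).
  { apply ZsumR_dominated; auto. intros a. split; [|apply Hrow].
    apply ZsumR_nonneg; [intros; apply H | apply Hrow]. }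
  split; [split|]; try apply Hout. intros a; apply Hrow.
Qed.

Lemma ZsumR2_plus F G : ex_ZsumR2 F -> ex_ZsumR2 G ->
  ex_ZsumR2 (fun a b => F a b + G a b) /\
  ZsumR2 (fun a b => F a b + G a b) = ZsumR2 F + ZsumR2 G.
Proof.
  intros [F1 F2] [G1 G2].
  assert (Hrow : forall a, ex_ZsumR (fun b => F a b + G a b) /\
                   ZsumR (fun b => F a b + G a b) = ZsumR (F a) + ZsumR (G a))
    by (intros a; apply ZsumR_plus; auto).
  destruct (ZsumR_plus _ _ F2 G2) as [H1 H2].
  split; [split|].
  - intros a; apply Hrow.
  - eapply ex_ZsumR_ext; [|exact H1]. intros a; symmetry; apply Hrow.
  - unfold ZsumR2. rewrite <- H2. apply ZsumR_ext. intros a; apply Hrow.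
Qed.

Lemma ZsumR2_scal c F : ex_ZsumR2 F ->
  ex_ZsumR2 (fun a b => c * F a b) /\ ZsumR2 (fun a b => c * F a b) = c * ZsumR2 F.
Proof.
  intros [F1 F2].
  assert (Hrow : forall a, ex_ZsumR (fun b => c * F a b) /\
                   ZsumR (fun b => c * F a b) = c * ZsumR (F a))
    by (intros a; apply ZsumR_scal; auto).
  destruct (ZsumR_scal c _ F2) as [H1 H2].
  split; [split|].
  - intros a; apply Hrow.
  - eapply ex_ZsumR_ext; [|exact H1]. intros a; symmetry; apply Hrow.
  - unfold ZsumR2. rewrite <- H2. apply ZsumR_ext. intros a; apply Hrow.
Qed.

(* Half of Tonelli's theorem: finite sums over rows are controlled by the swapped iterated sum. *)
Lemma ZsumR2_swap_le F : (forall a b, 0 <= F a b) ->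
  ex_ZsumR2 (fun b a => F a b) -> ex_ZsumR2 F /\ ZsumR2 F <= ZsumR2 (fun b a => F a b).
Proof.
  intros H0 [Hcol Hsum].
  assert (Hrow : forall a, ex_ZsumR (F a)).
  { intros a. refine (proj1 (ZsumR_dominated _ _ _ Hsum)). intros b.
    split; [apply H0|]. apply (le_ZsumR (fun a => F a b)); auto. }
  assert (Hout : ex_ZsumR (fun a => ZsumR (F a)) /\ ZsumR2 F <= ZsumR2 (fun b a => F a b)).
  { apply ZsumR_le_of_lsum; [intros; apply ZsumR_nonneg; auto|].
    intros l Hl. destruct (ZsumR_lsum F l Hrow) as [_ E]. rewrite <- E.
    apply ZsumR_dominated; auto. intros b. split; [apply lsum_nonneg; auto|].
    apply lsum_le_ZsumR; auto. }
  split; [split|]; auto; apply Hout.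
Qed.

Lemma ZsumR2_prod_reindex_le (f h : Z -> R) (phi : Z -> Z) (psi : Z -> Z -> Z) :
  (forall x, 0 <= f x) -> (forall x, 0 <= h x) -> ex_ZsumR f -> ex_ZsumR h ->
  Injective phi -> (forall a, Injective (psi a)) ->
  ex_ZsumR2 (fun a b => f (phi a) * h (psi a b)) /\
  ZsumR2 (fun a b => f (phi a) * h (psi a b)) <= ZsumR f * ZsumR h.
Proof.
  intros Hf Hh Hfs Hhs Hphi Hpsi.
  assert (Hrow : forall a, ex_ZsumR (fun b => f (phi a) * h (psi a b)) /\
                   ZsumR (fun b => f (phi a) * h (psi a b)) <= ZsumR h * f (phi a)).
  { intros a. destruct (ZsumR_reindex_le h (psi a) (Hpsi a) Hh Hhs) as [H1 H2].
    destruct (ZsumR_scal (f (phi a)) _ H1) as [H3 H4].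
    split; auto. rewrite H4, Rmult_comm. apply Rmult_le_compat_r; auto. }
  destruct (ZsumR_reindex_le f phi Hphi Hf Hfs) as [Hphi1 Hphi2].
  destruct (ZsumR_scal (ZsumR h) _ Hphi1) as [Hsc1 Hsc2].
  assert (Hh0 : 0 <= ZsumR h) by (apply ZsumR_nonneg; auto).
  destruct (ZsumR_dominated (fun a => ZsumR (fun b => f (phi a) * h (psi a b)))
              (fun a => ZsumR h * f (phi a))) as [Hout1 Hout2]; auto.
  { intros a. split; [|apply Hrow]. apply ZsumR_nonneg; [|apply Hrow].
    intros; apply Rmult_le_pos; auto. }
  split; [split; auto; apply Hrow|].
  eapply Rle_trans; [exact Hout2|]. rewrite Hsc2, Rmult_comm.
  apply Rmult_le_compat_r; auto.
Qed.

Definition Zconv (f h : Z -> R) (k : Z) : R := ZsumR (fun a => f a * h (k - a)%Z).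

Lemma Zconv_summable f h :
  (forall x, 0 <= f x) -> (forall x, 0 <= h x) -> ex_ZsumR f -> ex_ZsumR h ->
  ex_ZsumR2 (fun k a => f a * h (k - a)%Z) /\ ZsumR (Zconv f h) <= ZsumR f * ZsumR h.
Proof.
  intros Hf Hh Hfs Hhs.
  destruct (ZsumR2_prod_reindex_le f h (fun a => a) (fun a k => (k - a)%Z))
    as [Hswap Hbound]; auto.
  { intros x y E; exact E. }
  { intros a x y E; lia. }
  destruct (ZsumR2_swap_le (fun k a => f a * h (k - a)%Z)) as [Hex Hle]; auto.
  { intros; apply Rmult_le_pos; auto. }
  split; auto. eapply Rle_trans; [exact Hle | exact Hbound].
Qed.

Lemma Zconv_nonneg f h k :
  (forall x, 0 <= f x) -> (forall x, 0 <= h x) -> ex_ZsumR f -> ex_ZsumR h -> 0 <= Zconv f h k.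
Proof.
  intros Hf Hh Hfs Hhs. apply ZsumR_nonneg; [intros; apply Rmult_le_pos; auto|].
  apply (proj1 (Zconv_summable f h Hf Hh Hfs Hhs)).
Qed.

Lemma sq_le_of_AM_GM Y A B : 0 <= Y -> 0 <= A -> 0 <= B ->
  (forall lam, 0 < lam -> Y <= / 2 * (lam * A + / lam * B)) -> Y ^ 2 <= A * B.
Proof.
  intros HY HA HB H. destruct (Rle_lt_or_eq_dec 0 Y HY) as [Ypos|<-]; [|simpl; nra].
  destruct (Rle_lt_or_eq_dec 0 A HA) as [Apos|<-].
  - specialize (H (Y / A) (Rdiv_lt_0_compat _ _ Ypos Apos)).
    replace (/ 2 * (Y / A * A + / (Y / A) * B)) with (/ 2 * (Y + A * B / Y)) in H
      by (field; lra).
    assert (Hq : Y * Y <= Y * (A * B / Y)) by (apply Rmult_le_compat_l; lra).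
    replace (Y * (A * B / Y)) with (A * B) in Hq by (field; lra). simpl; lra.
  - exfalso. assert (HB1 : 0 < B + 1) by lra.
    specialize (H ((B + 1) / Y) (Rdiv_lt_0_compat _ _ HB1 Ypos)).
    replace (/ 2 * ((B + 1) / Y * 0 + / ((B + 1) / Y) * B)) with (Y * (B / (2 * (B + 1)))) in H
      by (field; lra).
    assert (B / (2 * (B + 1)) < 1).
    { apply Rmult_lt_reg_r with (2 * (B + 1)); [lra|]. unfold Rdiv.
      rewrite Rmult_assoc, Rinv_l; lra. }
    nra.
Qed.

Lemma ZsumR2_AM_GM F G lam : 0 < lam ->
  (forall a b, 0 <= F a b) -> (forall a b, 0 <= G a b) ->
  ex_ZsumR2 (fun a b => F a b ^ 2) -> ex_ZsumR2 (fun a b => G a b ^ 2) ->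
  ex_ZsumR2 (fun a b => F a b * G a b) /\
  ZsumR2 (fun a b => F a b * G a b) <=
    / 2 * (lam * ZsumR2 (fun a b => F a b ^ 2) + / lam * ZsumR2 (fun a b => G a b ^ 2)).
Proof.
  intros hl HF HG HF2 HG2.
  destruct (ZsumR2_scal lam _ HF2) as [a1 a2].
  destruct (ZsumR2_scal (/ lam) _ HG2) as [b1 b2].
  destruct (ZsumR2_plus _ _ a1 b1) as [c1 c2].
  destruct (ZsumR2_scal (/ 2) _ c1) as [d1 d2].
  assert (Hle : forall a b, 0 <= F a b * G a b <=
                  / 2 * (lam * F a b ^ 2 + / lam * G a b ^ 2)).
  { intros a b. specialize (HF a b). specialize (HG a b).
    split; [apply Rmult_le_pos; auto|].
    assert (E : / 2 * (lam * F a b ^ 2 + / lam * G a b ^ 2) - F a b * G a b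
                = / (2 * lam) * (lam * F a b - G a b) ^ 2) by (field; lra).
    assert (0 <= / (2 * lam) * (lam * F a b - G a b) ^ 2).
    { apply Rmult_le_pos; [left; apply Rinv_0_lt_compat; lra | apply pow2_ge_0]. }
    lra. }
  destruct (ZsumR2_dominated _ _ Hle d1) as [e1 e2].
  split; auto. rewrite d2, c2, a2, b2 in e2. exact e2.
Qed.

Lemma ZsumR2_cauchy_schwarz F G :
  (forall a b, 0 <= F a b) -> (forall a b, 0 <= G a b) ->
  ex_ZsumR2 (fun a b => F a b ^ 2) -> ex_ZsumR2 (fun a b => G a b ^ 2) ->
  ex_ZsumR2 (fun a b => F a b * G a b) /\
  ZsumR2 (fun a b => F a b * G a b) ^ 2 <=
    ZsumR2 (fun a b => F a b ^ 2) * ZsumR2 (fun a b => G a b ^ 2).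
Proof.
  intros HF HG HF2 HG2.
  destruct (ZsumR2_AM_GM F G 1 Rlt_0_1 HF HG HF2 HG2) as [Hex _].
  split; auto. apply sq_le_of_AM_GM.
  - apply ZsumR2_nonneg; auto. intros; apply Rmult_le_pos; auto.
  - apply ZsumR2_nonneg; auto. intros; apply pow2_ge_0.
  - apply ZsumR2_nonneg; auto. intros; apply pow2_ge_0.
  - intros lam hl. apply (ZsumR2_AM_GM F G lam hl HF HG HF2 HG2).
Qed.

(** * Complex sums *)

Lemma Im_le_Cmod c : Rabs (Im c) <= Cmod c.
Proof.
  rewrite <- sqrt_Rsqr_abs. apply sqrt_le_1_alt. unfold Rsqr, Im. simpl.
  generalize (fst c) (snd c); intros; nra.
Qed.

Lemma Rplus_mult_le_sqrt A B x y : A * x + B * y <= sqrt (A ^ 2 + B ^ 2) * sqrt (x ^ 2 + y ^ 2).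
Proof.
  rewrite <- sqrt_mult by nra.
  destruct (Rle_dec (A * x + B * y) 0) as [Hneg|Hpos].
  { eapply Rle_trans; [exact Hneg | apply sqrt_pos]. }
  rewrite <- (sqrt_pow2 (A * x + B * y)) by lra. apply sqrt_le_1_alt.
  replace ((A ^ 2 + B ^ 2) * (x ^ 2 + y ^ 2)) with ((A * x + B * y) ^ 2 + (A * y - B * x) ^ 2)
    by ring.
  generalize (pow2_ge_0 (A * y - B * x)). lra.
Qed.

(* With (A, B) = Zsum f: |Zsum f|^2 = sum_k (A Re f_k + B Im f_k) <= |Zsum f| sum_k |f_k|. *)
Lemma Cmod_Zsum_le f : zsummable f -> Cmod (Zsum f) <= ZsumR (fun k => Cmod (f k)).
Proof.
  intros Hf. change (ex_ZsumR (fun k => Cmod (f k))) in Hf.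
  assert (Hre : ex_ZsumR (fun k => Re (f k)))
    by (eapply ex_ZsumR_abs_le; [intros; apply re_le_Cmod | exact Hf]).
  assert (Him : ex_ZsumR (fun k => Im (f k)))
    by (eapply ex_ZsumR_abs_le; [intros; apply Im_le_Cmod | exact Hf]).
  set (A := ZsumR (fun k => Re (f k))). set (B := ZsumR (fun k => Im (f k))).
  set (T := ZsumR (fun k => Cmod (f k))).
  change (Cmod (Zsum f)) with (sqrt (A ^ 2 + B ^ 2)).
  destruct (ZsumR_scal A _ Hre) as [a1 a2]. destruct (ZsumR_scal B _ Him) as [b1 b2].
  destruct (ZsumR_plus _ _ a1 b1) as [c1 c2].
  destruct (ZsumR_scal (sqrt (A ^ 2 + B ^ 2)) _ Hf) as [d1 d2].
  fold A B T in a2, b2, d2.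
  assert (Hle : A * A + B * B <= sqrt (A ^ 2 + B ^ 2) * T).
  { rewrite <- a2, <- b2, <- c2, <- d2.
    apply ZsumR_le; auto. intros x. apply Rplus_mult_le_sqrt. }
  assert (E : A * A + B * B = sqrt (A ^ 2 + B ^ 2) * sqrt (A ^ 2 + B ^ 2))
    by (rewrite sqrt_sqrt by nra; ring).
  assert (HT : 0 <= T) by (apply ZsumR_nonneg; auto; intros; apply Cmod_ge_0).
  generalize (sqrt_pos (A ^ 2 + B ^ 2)). nra.
Qed.

Lemma Cmod_Zsum2_le F :
  zsummable2 F -> Cmod (Zsum (fun a => Zsum (F a))) <= ZsumR2 (fun a b => Cmod (F a b)).
Proof.
  intros [Hrow Hout].
  assert (Hle : ex_ZsumR (fun a => Cmod (Zsum (F a))) /\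
                ZsumR (fun a => Cmod (Zsum (F a))) <= ZsumR2 (fun a b => Cmod (F a b))).
  { apply ZsumR_dominated; auto. intros a. split; [apply Cmod_ge_0 | apply Cmod_Zsum_le, Hrow]. }
  eapply Rle_trans; [apply Cmod_Zsum_le, Hle | apply Hle].
Qed.

(** * The multiplier of B3 *)

(* [1/((m+1)(m+2)) = 1/(m+1) - 1/(m+2)] telescopes, and it dominates [1/(6 n^2)] for [n <> 0]. *)
Definition weight (n : Z) : R := / ((IZR (Z.abs n) + 1) * (IZR (Z.abs n) + 2)).

Lemma IZR_abs_nonneg n : 0 <= IZR (Z.abs n).
Proof. apply IZR_le; lia. Qed.

Lemma IZR_abs_ge1 n : n <> 0%Z -> 1 <= IZR (Z.abs n).
Proof. intros; apply IZR_le; lia. Qed.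

Lemma weight_nonneg n : 0 <= weight n.
Proof.
  unfold weight. generalize (IZR_abs_nonneg n); intros.
  left; apply Rinv_0_lt_compat; nra.
Qed.

Lemma sum_n_zpair_weight N : @eq R (sum_n (zpair weight) N) (3 / 2 - 2 / (INR N + 2)).
Proof.
  induction N as [|N IH].
  - rewrite sum_O. unfold weight. simpl. field.
  - rewrite sum_Sn_R, IH. unfold zpair, weight.
    replace (Z.abs (Z.of_nat N + 1)) with (Z.of_nat N + 1)%Z by lia.
    replace (Z.abs (- (Z.of_nat N + 1))) with (Z.of_nat N + 1)%Z by lia.
    rewrite plus_IZR, <- INR_IZR_INZ, S_INR.
    generalize (pos_INR N); intros. field. repeat split; lra.
Qed.

Lemma weight_summable : ex_ZsumR weight /\ ZsumR weight <= 3 / 2.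
Proof.
  apply ZsumR_le_of_lsum; [apply weight_nonneg|].
  intros l Hl. destruct (incl_Zball l) as [N HN].
  apply Rle_trans with (lsum weight (Zball N)); [apply lsum_incl; auto; apply weight_nonneg|].
  rewrite <- sum_n_zpair, sum_n_zpair_weight.
  assert (0 < 2 / (INR N + 2)) by (generalize (pos_INR N); intros; apply Rdiv_lt_0_compat; lra).
  lra.
Qed.

Lemma inv_sq_le_weight n : n <> 0%Z -> / IZR n ^ 2 <= 6 * weight n.
Proof.
  intros Hn. unfold weight.
  assert (Ha := IZR_abs_ge1 n Hn).
  rewrite <- pow2_abs, <- abs_IZR. set (a := IZR (Z.abs n)) in *.
  replace (6 * / ((a + 1) * (a + 2))) with (/ ((a + 1) * (a + 2) / 6)) by (field; lra).
  apply Rinv_le_contravar; [nra|]. simpl. nra.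
Qed.

Lemma weight_pair_summable (phi : Z -> Z) (psi : Z -> Z -> Z) :
  Injective phi -> (forall a, Injective (psi a)) ->
  ex_ZsumR2 (fun a b => weight (phi a) * weight (psi a b)) /\
  ZsumR2 (fun a b => weight (phi a) * weight (psi a b)) <= 3 / 2 * (3 / 2).
Proof.
  intros Hphi Hpsi. destruct weight_summable as [Hex Hle].
  destruct (ZsumR2_prod_reindex_le weight weight phi psi) as [H1 H2];
    auto using weight_nonneg.
  split; auto. eapply Rle_trans; [exact H2|].
  apply Rmult_le_compat; auto using ZsumR_nonneg, weight_nonneg.
Qed.

Definition B3_multiplier (k k1 k2 : Z) : R :=
  let k3 := (k - k1 - k2)%Z in
  let p := ((k1 + k2) * (k2 + k3) * (k3 + k1))%Z in
  if (Z.eqb k1 0 || Z.eqb k2 0 || Z.eqb k3 0 || Z.eqb p 0)%bool then 0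
  else IZR k ^ 2 / Rabs (IZR (k1 * p)).

(* With [a = k1 + k2], [b = k - k1], [c = k - k2]: every term on the right involves only two of
   the four forms [k1, a, b, c], and any two of them are independent coordinates on [(k1, k2)]. *)
Lemma sq_div_abs_prod4_le (x a b c k : R) : x <> 0 -> a <> 0 -> b <> 0 -> c <> 0 ->
  2 * x = a - b + c -> k = x + b ->
  k ^ 2 / Rabs (x * (a * b * c)) <=
  1 / Rabs (b * c) + 5 / Rabs (a * c) + 1 / Rabs (a * b) + 2 / Rabs (x * c) + 2 / Rabs (x * a).
Proof.
  intros Hx Ha Hb Hc E1 E2.
  rewrite !Rabs_mult.
  assert (Px : 0 < Rabs x) by (apply Rabs_pos_lt; auto).
  assert (Pa : 0 < Rabs a) by (apply Rabs_pos_lt; auto).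
  assert (Pb : 0 < Rabs b) by (apply Rabs_pos_lt; auto).
  assert (Pc : 0 < Rabs c) by (apply Rabs_pos_lt; auto).
  assert (Hk : Rabs k <= Rabs x + Rabs b) by (rewrite E2; apply Rabs_triang).
  assert (Hx2 : 2 * Rabs x <= Rabs a + Rabs b + Rabs c).
  { replace (2 * Rabs x) with (Rabs (2 * x)) by (rewrite Rabs_mult, (Rabs_pos_eq 2); lra).
    rewrite E1. unfold Rminus.
    generalize (Rabs_triang (a + - b) c) (Rabs_triang a (- b)). rewrite Rabs_Ropp. lra. }
  assert (Hb2 : Rabs b <= Rabs a + Rabs c + 2 * Rabs x).
  { replace b with (a + c + - (2 * x)) by lra.
    generalize (Rabs_triang (a + c) (- (2 * x))) (Rabs_triang a c).
    rewrite Rabs_Ropp, Rabs_mult, (Rabs_pos_eq 2) by lra. lra. }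
  rewrite <- pow2_abs.
  set (X := Rabs x) in *. set (A := Rabs a) in *. set (B := Rabs b) in *.
  set (C := Rabs c) in *. set (K := Rabs k) in *.
  assert (HK : K ^ 2 <= X * A + 5 * X * B + X * C + 2 * A * B + 2 * B * C).
  { assert (K * K <= (X + B) * (X + B)) by (apply Rmult_le_compat; unfold K; auto using Rabs_pos).
    nra. }
  replace (1 / (B * C) + 5 / (A * C) + 1 / (A * B) + 2 / (X * C) + 2 / (X * A))
    with ((X * A + 5 * X * B + X * C + 2 * A * B + 2 * B * C) / (X * (A * B * C)))
    by (field; lra).
  apply Rmult_le_compat_r; auto.
  left. apply Rinv_0_lt_compat. repeat apply Rmult_lt_0_compat; auto.
Qed.

Lemma sq_sum5_le t1 t2 t3 t4 t5 :
  (t1 + t2 + t3 + t4 + t5) ^ 2 <= 5 * (t1 ^ 2 + t2 ^ 2 + t3 ^ 2 + t4 ^ 2 + t5 ^ 2).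
Proof.
  generalize (pow2_ge_0 (t1 - t2)) (pow2_ge_0 (t1 - t3)) (pow2_ge_0 (t1 - t4))
    (pow2_ge_0 (t1 - t5)) (pow2_ge_0 (t2 - t3)) (pow2_ge_0 (t2 - t4)) (pow2_ge_0 (t2 - t5))
    (pow2_ge_0 (t3 - t4)) (pow2_ge_0 (t3 - t5)) (pow2_ge_0 (t4 - t5)).
  nra.
Qed.

Lemma sq_div_abs_le_weight (x y : Z) (c : R) : x <> 0%Z -> y <> 0%Z -> 0 <= c <= 5 ->
  (c / Rabs (IZR x * IZR y)) ^ 2 <= 900 * (weight x * weight y).
Proof.
  intros Hx Hy Hc.
  assert (Ix : IZR x <> 0) by (apply not_0_IZR; auto).
  assert (Iy : IZR y <> 0) by (apply not_0_IZR; auto).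
  replace ((c / Rabs (IZR x * IZR y)) ^ 2) with (c ^ 2 * (/ IZR x ^ 2 * / IZR y ^ 2))
    by (unfold Rdiv; rewrite Rpow_mult_distr, pow_inv, pow2_abs; field; auto).
  assert (Hxy : / IZR x ^ 2 * / IZR y ^ 2 <= 36 * (weight x * weight y)).
  { replace (36 * (weight x * weight y)) with ((6 * weight x) * (6 * weight y)) by ring.
    apply Rmult_le_compat; auto using inv_sq_le_weight;
      left; apply Rinv_0_lt_compat, pow2_gt_0; auto. }
  assert (0 <= / IZR x ^ 2 * / IZR y ^ 2).
  { apply Rmult_le_pos; left; apply Rinv_0_lt_compat, pow2_gt_0; auto. }
  assert (c ^ 2 <= 25) by nra.
  generalize (pow2_ge_0 c). nra.
Qed.

Definition multiplier_majorant (k k1 k2 : Z) : R :=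
  4500 * (weight (k - k1) * weight (k - k2) + weight (k - k2) * weight (k1 + k2)
          + weight (k - k1) * weight (k1 + k2) + weight k1 * weight (k - k2)
          + weight k1 * weight (k1 + k2)).

Lemma multiplier_majorant_nonneg k k1 k2 : 0 <= multiplier_majorant k k1 k2.
Proof.
  unfold multiplier_majorant.
  repeat (apply Rmult_le_pos || apply Rplus_le_le_0_compat); try lra; apply weight_nonneg.
Qed.

Lemma B3_multiplier_sq_le k k1 k2 : B3_multiplier k k1 k2 ^ 2 <= multiplier_majorant k k1 k2.
Proof.
  assert (Hmaj := multiplier_majorant_nonneg k k1 k2).
  unfold B3_multiplier. cbv zeta.
  destruct (Z.eqb_spec k1 0); destruct (Z.eqb_spec k2 0); destruct (Z.eqb_spec (k - k1 - k2) 0);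
  destruct (Z.eqb_spec ((k1 + k2) * (k2 + (k - k1 - k2)) * (k - k1 - k2 + k1)) 0) as [|Hp];
  cbn [orb]; try (simpl; lra).
  replace ((k1 + k2) * (k2 + (k - k1 - k2)) * (k - k1 - k2 + k1))%Z
    with ((k1 + k2) * (k - k1) * (k - k2))%Z in * by ring.
  assert (Ha : (k1 + k2 <> 0)%Z) by (intro E; apply Hp; rewrite E; ring).
  assert (Hb : (k - k1 <> 0)%Z) by (intro E; apply Hp; rewrite E; ring).
  assert (Hc : (k - k2 <> 0)%Z) by (intro E; apply Hp; rewrite E; ring).
  rewrite !mult_IZR.
  assert (HM := sq_div_abs_prod4_le (IZR k1) (IZR (k1 + k2)) (IZR (k - k1)) (IZR (k - k2)) (IZR k)
     (not_0_IZR _ n) (not_0_IZR _ Ha) (not_0_IZR _ Hb) (not_0_IZR _ Hc)).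
  rewrite !plus_IZR, !minus_IZR in HM. specialize (HM ltac:(ring) ltac:(ring)).
  rewrite <- !plus_IZR, <- !minus_IZR in HM.
  assert (H0 : 0 <= IZR k ^ 2 / Rabs (IZR k1 * (IZR (k1 + k2) * IZR (k - k1) * IZR (k - k2)))).
  { apply Rmult_le_pos; [apply pow2_ge_0|]. left; apply Rinv_0_lt_compat, Rabs_pos_lt.
    repeat apply Rmult_integral_contrapositive_currified; apply not_0_IZR; auto. }
  eapply Rle_trans; [apply pow_incr; split; [exact H0|exact HM]|].
  eapply Rle_trans; [apply sq_sum5_le|].
  generalize (sq_div_abs_le_weight (k - k1) (k - k2) 1 Hb Hc ltac:(lra))
    (sq_div_abs_le_weight (k1 + k2) (k - k2) 5 Ha Hc ltac:(lra))
    (sq_div_abs_le_weight (k1 + k2) (k - k1) 1 Ha Hb ltac:(lra))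
    (sq_div_abs_le_weight k1 (k - k2) 2 n Hc ltac:(lra))
    (sq_div_abs_le_weight k1 (k1 + k2) 2 n Ha ltac:(lra)).
  unfold multiplier_majorant. lra.
Qed.

Definition multiplier_bound : R := 4500 * (5 * (3 / 2 * (3 / 2))).

Lemma multiplier_majorant_summable k :
  ex_ZsumR2 (multiplier_majorant k) /\
  ZsumR2 (multiplier_majorant k) <= multiplier_bound.
Proof.
  assert (inj_id : Injective (fun x : Z => x)) by (intros x y E; exact E).
  assert (inj_sub : forall c, Injective (fun x => (c - x)%Z)) by (intros c x y E; lia).
  assert (inj_add : forall c, Injective (fun x => (x + c)%Z)) by (intros c x y E; lia).
  destruct (weight_pair_summable (fun a => k - a)%Z (fun _ b => k - b)%Z) as [e1 b1]; auto.
  destruct (weight_pair_summable (fun b => k - b)%Z (fun b a => a + b)%Z) as [e2' b2']; auto.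
  destruct (ZsumR2_swap_le (fun a b => weight (k - b) * weight (a + b))) as [e2 b2]; auto.
  { intros; apply Rmult_le_pos; apply weight_nonneg. }
  destruct (weight_pair_summable (fun a => k - a)%Z (fun a b => a + b)%Z) as [e3 b3];
    [auto | intros a x y E; lia|].
  destruct (weight_pair_summable (fun a => a) (fun _ b => k - b)%Z) as [e4 b4]; auto.
  destruct (weight_pair_summable (fun a => a) (fun a b => a + b)%Z) as [e5 b5];
    [auto | intros a x y E; lia|].
  destruct (ZsumR2_plus _ _ e1 e2) as [s2 t2].
  destruct (ZsumR2_plus _ _ s2 e3) as [s3 t3].
  destruct (ZsumR2_plus _ _ s3 e4) as [s4 t4].
  destruct (ZsumR2_plus _ _ s4 e5) as [s5 t5].
  destruct (ZsumR2_scal 4500 _ s5) as [s6 t6].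
  split; [exact s6|]. unfold multiplier_majorant, multiplier_bound.
  rewrite t6, t5, t4, t3, t2. lra.
Qed.

Lemma B3_multiplier_sq_summable k :
  ex_ZsumR2 (fun a b => B3_multiplier k a b ^ 2) /\
  ZsumR2 (fun a b => B3_multiplier k a b ^ 2) <= multiplier_bound.
Proof.
  destruct (multiplier_majorant_summable k) as [H1 H2].
  destruct (ZsumR2_dominated (fun a b => B3_multiplier k a b ^ 2) (multiplier_majorant k))
    as [H3 H4]; auto.
  - intros a b. split; [apply pow2_ge_0 | apply B3_multiplier_sq_le].
  - split; auto. lra.
Qed.

Lemma B3_multiplier_nonneg k k1 k2 : 0 <= B3_multiplier k k1 k2.
Proof.
  unfold B3_multiplier. cbv zeta.
  destruct (_ || _)%bool eqn:E; [lra|].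
  rewrite !Bool.orb_false_iff, !Z.eqb_neq in E. destruct E as [[[E1 _] _] E4].
  apply Rle_mult_inv_pos; [apply pow2_ge_0|]. apply Rabs_pos_lt, not_0_IZR, Z.neq_mul_0; auto.
Qed.

(** * The estimate *)

Definition Hdot_amp (s : R) (u : seqZ) (j : Z) : R :=
  if Z.eqb j 0 then 0 else Rpower (IZR (Z.abs j)) s * Cmod (u j).

Lemma Hdot_amp_nonneg s u j : 0 <= Hdot_amp s u j.
Proof.
  unfold Hdot_amp. destruct (Z.eqb j 0); [lra|].
  apply Rmult_le_pos; [left; apply exp_pos | apply Cmod_ge_0].
Qed.

Lemma Hdot_amp_sq s u j : Hdot_amp s u j ^ 2 = Hdot_term s u j.
Proof.
  unfold Hdot_amp, Hdot_term. destruct (Z.eqb j 0); [ring|].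
  replace (2 * s) with (s + s) by ring. rewrite Rpower_plus. ring.
Qed.

Lemma Hdot_term_nonneg s u j : 0 <= Hdot_term s u j.
Proof. rewrite <- Hdot_amp_sq. apply pow2_ge_0. Qed.

Lemma Cmod_cexpi th : Cmod (cexpi th) = 1.
Proof.
  unfold Cmod, cexpi. simpl. rewrite !Rmult_1_r, <- sqrt_1. f_equal.
  generalize (sin2_cos2 th). unfold Rsqr. lra.
Qed.

Lemma Cmod_B3_term t u v w k k1 k2 :
  Cmod (B3_term t u v w k k1 k2) =
  (let k3 := (k - k1 - k2)%Z in
   let p := ((k1 + k2) * (k2 + k3) * (k3 + k1))%Z in
   if (Z.eqb k1 0 || Z.eqb k2 0 || Z.eqb k3 0 || Z.eqb p 0)%bool then 0
   else Cmod (u k1) * (Cmod (v k2) * Cmod (w k3)) / Rabs (IZR (k1 * p))).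
Proof.
  unfold B3_term. cbv zeta.
  set (p := ((k1 + k2) * (k2 + (k - k1 - k2)) * (k - k1 - k2 + k1))%Z).
  destruct (Z.eqb k1 0 || Z.eqb k2 0 || Z.eqb (k - k1 - k2) 0 || Z.eqb p 0)%bool eqn:Ed;
    [apply Cmod_0|].
  rewrite !Bool.orb_false_iff, !Z.eqb_neq in Ed. destruct Ed as [[[E1 _] _] E4].
  assert (Hd : IZR (k1 * p) <> 0) by (apply not_0_IZR, Z.neq_mul_0; auto).
  rewrite Cmod_mult, Cmod_div, Cmod_cexpi, !Cmod_mult, Cmod_R.
  - unfold Rdiv. ring.
  - intro H. apply Hd. exact (f_equal fst H).
Qed.

Lemma Rpower_le_sum3 s K x y z : 0 <= s -> 0 < K -> 1 <= x -> 1 <= y -> 1 <= z ->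
  K <= x + y + z -> Rpower K s <= Rpower 3 s * (Rpower x s * (Rpower y s * Rpower z s)).
Proof.
  intros hs HK Hx Hy Hz HKs.
  rewrite !Rpower_mult_distr by (repeat apply Rmult_lt_0_compat; lra).
  apply Rle_Rpower_l; auto. split; [lra|].
  assert (1 <= y * z) by nra. assert (x <= x * (y * z)) by nra.
  assert (y * z <= x * (y * z)) by nra. nra.
Qed.

Lemma B3_term_weighted_le s t u v w k k1 k2 : 0 <= s -> k <> 0%Z ->
  Rpower (IZR (Z.abs k)) (s + 2) * Cmod (B3_term t u v w k k1 k2) <=
  Rpower 3 s * (B3_multiplier k k1 k2 *
    (Hdot_amp s u k1 * (Hdot_amp s v k2 * Hdot_amp s w (k - k1 - k2)))).
Proof.
  intros hs hk. rewrite Cmod_B3_term. unfold B3_multiplier, Hdot_amp. cbv zeta.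
  destruct (Z.eqb_spec k1 0); destruct (Z.eqb_spec k2 0); destruct (Z.eqb_spec (k - k1 - k2) 0);
  destruct (Z.eqb_spec ((k1 + k2) * (k2 + (k - k1 - k2)) * (k - k1 - k2 + k1)) 0) as [|Hp];
  cbn [orb]; try (rewrite !Rmult_0_l, !Rmult_0_r; lra).
  set (p := ((k1 + k2) * (k2 + (k - k1 - k2)) * (k - k1 - k2 + k1))%Z) in *.
  assert (HD : 0 < Rabs (IZR (k1 * p))) by (apply Rabs_pos_lt, not_0_IZR, Z.neq_mul_0; auto).
  assert (HK : 0 < IZR (Z.abs k)) by (generalize (IZR_abs_ge1 _ hk); lra).
  assert (HS : Rpower (IZR (Z.abs k)) s <= Rpower 3 s *
     (Rpower (IZR (Z.abs k1)) s * (Rpower (IZR (Z.abs k2)) s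
        * Rpower (IZR (Z.abs (k - k1 - k2))) s))).
  { apply Rpower_le_sum3; auto using IZR_abs_ge1.
    rewrite <- !plus_IZR. apply IZR_le. lia. }
  rewrite Rpower_plus. replace 2 with (INR 2) by (simpl; ring). rewrite Rpower_pow by auto.
  replace (IZR k ^ 2) with (IZR (Z.abs k) ^ 2) by (rewrite abs_IZR, pow2_abs; auto).
  set (Q := Cmod (u k1) * (Cmod (v k2) * Cmod (w (k - k1 - k2)%Z))
              * IZR (Z.abs k) ^ 2 / Rabs (IZR (k1 * p))).
  assert (HQ : 0 <= Q).
  { unfold Q. apply Rmult_le_pos; [|left; apply Rinv_0_lt_compat; auto].
    apply Rmult_le_pos; [|apply pow2_ge_0].
    apply Rmult_le_pos; [|apply Rmult_le_pos]; apply Cmod_ge_0. }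
  transitivity (Rpower (IZR (Z.abs k)) s * Q); [right; unfold Q, Rdiv; ring|].
  eapply Rle_trans; [apply Rmult_le_compat_r; [exact HQ | exact HS]|].
  right. unfold Q, Rdiv. ring.
Qed.

Section B3_estimate.

Variables (s t : R) (u v w : seqZ).
Hypothesis hs : 0 <= s.
Hypotheses (hu : in_Hdot s u) (hv : in_Hdot s v) (hw : in_Hdot s w).

Definition amp3 (k a b : Z) : R :=
  Hdot_amp s u a * (Hdot_amp s v b * Hdot_amp s w (k - a - b)).

Definition conv3 : Z -> R := Zconv (Hdot_term s u) (Zconv (Hdot_term s v) (Hdot_term s w)).

Lemma conv_vw_summable :
  ex_ZsumR2 (fun k a => Hdot_term s v a * Hdot_term s w (k - a)%Z) /\
  ZsumR (Zconv (Hdot_term s v) (Hdot_term s w)) <= ZsumR (Hdot_term s v) * ZsumR (Hdot_term s w).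
Proof. apply Zconv_summable; auto using Hdot_term_nonneg. Qed.

Lemma conv_vw_nonneg k : 0 <= Zconv (Hdot_term s v) (Hdot_term s w) k.
Proof. apply Zconv_nonneg; auto using Hdot_term_nonneg. Qed.

Lemma conv3_summable :
  ex_ZsumR2 (fun k a => Hdot_term s u a * Zconv (Hdot_term s v) (Hdot_term s w) (k - a)%Z) /\
  ZsumR conv3 <= ZsumR (Hdot_term s u) * (ZsumR (Hdot_term s v) * ZsumR (Hdot_term s w)).
Proof.
  destruct conv_vw_summable as [[_ Hvw] Hle].
  destruct (Zconv_summable (Hdot_term s u) (Zconv (Hdot_term s v) (Hdot_term s w)))
    as [Hex Hbound]; auto using Hdot_term_nonneg, conv_vw_nonneg.
  split; auto. eapply Rle_trans; [exact Hbound|].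
  apply Rmult_le_compat_l; auto. apply ZsumR_nonneg; auto using Hdot_term_nonneg.
Qed.

Lemma amp3_sq_summable k :
  ex_ZsumR2 (fun a b => amp3 k a b ^ 2) /\ ZsumR2 (fun a b => amp3 k a b ^ 2) = conv3 k.
Proof.
  assert (Hsq : forall a b, amp3 k a b ^ 2 =
            Hdot_term s u a * (Hdot_term s v b * Hdot_term s w (k - a - b)%Z)).
  { intros a b. unfold amp3. rewrite <- !Hdot_amp_sq. ring. }
  assert (Hrow : forall a, ex_ZsumR (fun b => amp3 k a b ^ 2) /\
            ZsumR (fun b => amp3 k a b ^ 2) =
            Hdot_term s u a * Zconv (Hdot_term s v) (Hdot_term s w) (k - a)).
  { intros a. destruct conv_vw_summable as [[Hvw _] _].
    destruct (ZsumR_scal (Hdot_term s u a) _ (Hvw (k - a)%Z)) as [H1 H2].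
    split; [eapply ex_ZsumR_ext; [|exact H1]; intros; symmetry; apply Hsq|].
    rewrite (ZsumR_ext _ _ (Hsq a)). exact H2. }
  destruct conv3_summable as [[Hout _] _].
  split; [split|].
  - intros a; apply Hrow.
  - eapply ex_ZsumR_ext; [|exact (Hout k)]. intros a; symmetry; apply Hrow.
  - unfold ZsumR2, conv3, Zconv at 1. apply ZsumR_ext. intros a; apply Hrow.
Qed.

Lemma amp3_nonneg k a b : 0 <= amp3 k a b.
Proof. unfold amp3. repeat apply Rmult_le_pos; apply Hdot_amp_nonneg. Qed.

Lemma multiplier_amp3_summable k :
  ex_ZsumR2 (fun a b => B3_multiplier k a b * amp3 k a b) /\
  ZsumR2 (fun a b => B3_multiplier k a b * amp3 k a b) ^ 2 <= multiplier_bound * conv3 k.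
Proof.
  destruct (B3_multiplier_sq_summable k) as [HM1 HM2].
  destruct (amp3_sq_summable k) as [HX1 HX2].
  destruct (ZsumR2_cauchy_schwarz (B3_multiplier k) (amp3 k)) as [H1 H2];
    auto using B3_multiplier_nonneg, amp3_nonneg.
  split; auto. eapply Rle_trans; [exact H2|]. rewrite HX2.
  apply Rmult_le_compat_r; auto. rewrite <- HX2.
  apply ZsumR2_nonneg; auto. intros; apply pow2_ge_0.
Qed.

Lemma B3_weighted_le k : k <> 0%Z ->
  zsummable2 (B3_term t u v w k) /\
  Rpower (IZR (Z.abs k)) (s + 2) * Cmod (B3 t u v w k) <=
    Rpower 3 s * ZsumR2 (fun a b => B3_multiplier k a b * amp3 k a b).
Proof.
  intros hk.
  set (r := Rpower (IZR (Z.abs k)) (s + 2)).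
  assert (Hr : 0 < r) by apply exp_pos.
  destruct (multiplier_amp3_summable k) as [HMX _].
  destruct (ZsumR2_scal (Rpower 3 s / r) _ HMX) as [H1 H2].
  assert (Hpt : forall a b, 0 <= Cmod (B3_term t u v w k a b) <=
                  Rpower 3 s / r * (B3_multiplier k a b * amp3 k a b)).
  { intros a b. split; [apply Cmod_ge_0|]. apply Rmult_le_reg_l with r; auto.
    replace (r * (Rpower 3 s / r * (B3_multiplier k a b * amp3 k a b)))
      with (Rpower 3 s * (B3_multiplier k a b * amp3 k a b)) by (field; lra).
    apply B3_term_weighted_le; auto. }
  destruct (ZsumR2_dominated _ _ Hpt H1) as [H3 H4].
  split; [exact H3|].
  apply Rle_trans with (r * ZsumR2 (fun a b => Cmod (B3_term t u v w k a b))).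
  - apply Rmult_le_compat_l; [lra|]. apply Cmod_Zsum2_le, H3.
  - rewrite H2 in H4. apply Rmult_le_compat_l with (r := r) in H4; [|lra].
    replace (r * (Rpower 3 s / r * ZsumR2 (fun a b => B3_multiplier k a b * amp3 k a b)))
      with (Rpower 3 s * ZsumR2 (fun a b => B3_multiplier k a b * amp3 k a b))
      in H4 by (field; lra).
    exact H4.
Qed.

Lemma Hdot_term_B3_le k :
  Hdot_term (s + 2) (B3 t u v w) k <= Rpower 3 s ^ 2 * multiplier_bound * conv3 k.
Proof.
  assert (Hc : 0 <= multiplier_bound * conv3 k).
  { apply Rmult_le_pos; [unfold multiplier_bound; lra|].
    apply Zconv_nonneg; auto using Hdot_term_nonneg, conv_vw_nonneg.
    apply conv_vw_summable. }
  rewrite Rmult_assoc. unfold Hdot_term at 1. destruct (Z.eqb_spec k 0) as [_|hk].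
  { apply Rmult_le_pos; [apply pow2_ge_0 | exact Hc]. }
  destruct (B3_weighted_le k hk) as [_ Hle].
  destruct (multiplier_amp3_summable k) as [HMX Hsq].
  set (r := Rpower (IZR (Z.abs k)) (s + 2)) in *.
  set (Y := ZsumR2 (fun a b => B3_multiplier k a b * amp3 k a b)) in *.
  replace (Rpower (IZR (Z.abs k)) (2 * (s + 2))) with (r * r)
    by (unfold r; rewrite <- Rpower_plus; f_equal; ring).
  assert (Hr : 0 <= r * Cmod (B3 t u v w k))
    by (apply Rmult_le_pos; [left; apply exp_pos | apply Cmod_ge_0]).
  apply Rle_trans with ((Rpower 3 s * Y) ^ 2).
  - replace (r * r * Cmod (B3 t u v w k) ^ 2) with ((r * Cmod (B3 t u v w k)) ^ 2) by ring.
    apply pow_incr; auto.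
  - rewrite Rpow_mult_distr. apply Rmult_le_compat_l; auto. apply pow2_ge_0.
Qed.

Lemma B3_Hdot_bound :
  in_Hdot (s + 2) (B3 t u v w) /\
  Hdot_norm (s + 2) (B3 t u v w) <=
    Rpower 3 s * sqrt multiplier_bound * Hdot_norm s u * Hdot_norm s v * Hdot_norm s w.
Proof.
  destruct conv3_summable as [[_ H3] H3le]. change (ex_ZsumR conv3) in H3.
  destruct (ZsumR_scal (Rpower 3 s ^ 2 * multiplier_bound) _ H3) as [Hs1 Hs2].
  destruct (ZsumR_dominated (Hdot_term (s + 2) (B3 t u v w)) _
              (fun k => conj (Hdot_term_nonneg _ _ k) (Hdot_term_B3_le k)) Hs1) as [Hex Hle].
  split; [exact Hex|].
  assert (HN : forall f, in_Hdot s f -> 0 <= ZsumR (Hdot_term s f))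
    by (intros; apply ZsumR_nonneg; auto using Hdot_term_nonneg).
  assert (Hc : 0 <= Rpower 3 s ^ 2 * multiplier_bound)
    by (apply Rmult_le_pos; [apply pow2_ge_0 | unfold multiplier_bound; lra]).
  set (NU := ZsumR (Hdot_term s u)) in *. set (NV := ZsumR (Hdot_term s v)) in *.
  set (NW := ZsumR (Hdot_term s w)) in *.
  assert (HU : 0 <= NU) by (apply HN, hu). assert (HV : 0 <= NV) by (apply HN, hv).
  assert (HW : 0 <= NW) by (apply HN, hw).
  assert (Hmb : 0 <= multiplier_bound) by (unfold multiplier_bound; lra).
  unfold Hdot_norm. fold NU NV NW.
  replace (Rpower 3 s * sqrt multiplier_bound * sqrt NU * sqrt NV * sqrt NW)
    with (sqrt (Rpower 3 s ^ 2 * multiplier_bound * (NU * (NV * NW)))).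
  - apply sqrt_le_1_alt. rewrite Hs2 in Hle. eapply Rle_trans; [exact Hle|].
    apply Rmult_le_compat_l; auto.
  - assert (H3s : 0 <= Rpower 3 s) by (left; apply exp_pos).
    clearbody NU NV NW. revert Hmb H3s. generalize multiplier_bound (Rpower 3 s).
    intros m c Hm Hc3.
    rewrite !sqrt_mult, sqrt_pow2; auto using Rmult_le_pos, pow2_ge_0. ring.
Qed.

End B3_estimate.

Theorem lemma7p7 (s : R) (hs : 0 <= s) :
  exists c3 : R,
    forall (t : R) (u v w : seqZ),
      in_Hdot s u -> in_Hdot s v -> in_Hdot s w ->
      (forall k : Z, k <> 0%Z -> zsummable2 (B3_term t u v w k)) /\
      in_Hdot (s + 2) (B3 t u v w) /\
      Hdot_norm (s + 2) (B3 t u v w)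
        <= c3 * Hdot_norm s u * Hdot_norm s v * Hdot_norm s w.
Proof.
  exists (Rpower 3 s * sqrt multiplier_bound). intros t u v w hu hv hw.
  split; [intros k hk; apply (B3_weighted_le s t u v w hs hu hv hw k hk)|].
  apply B3_Hdot_bound; auto.
Qed.
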